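(* Let $E$ be a directed graph and let $G(E)$ carry a Hausdorff topology making it a topological semigroup such that its set of idempotents $E(G(E))$ is compact. Then $G(E)$ is closed in every topological semigroup $S$ which contains $G(E)$ as a subsemigroup (and topological subspace).
   Context: All spaces are Hausdorff. $E(T)$ denotes the set of idempotents of a semigroup $T$. A directed graph $E=(E^0,E^1,r,s)$ has vertices $E^0$, edges $E^1$, source/range maps $s,r:E^1\to E^0$; paths are vertices and sequences of edges $e_1\ldots e_n$ with $r(e_i)=s(e_{i+1})$. The graph inverse semigroup $G(E)$ is the semigroup with zero $0$ generated by $E^0$, $E^1$, $E^{-1}=\{e^{-1}\mid e\in E^1\}$ subject to: for $a,b\in E^0$, $e,f\in E^1$: $ab=a$ if $a=b$, else $0$; $s(e)e=er(e)=e$; $e^{-1}s(e)=r(e)e^{-1}=e^{-1}$; $e^{-1}f=r(e)$ if $e=f$, else $0$. Non-zero elements are uniquely $uv^{-1}$ with paths $u,v$, $r(u)=r(v)$, multiplied by $u_1v_1^{-1}\cdot u_2v_2^{-1}=u_1wv_2^{-1}$ if $u_2=v_1w$, $u_1(v_2w)^{-1}$ if $v_1=u_2w$, else $0$. *)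

From HB Require Import structures.
From mathcomp Require Import all_boot all_order.
From mathcomp Require Import boolp classical_sets functions topology.
Set Implicit Arguments. Unset Strict Implicit. Unset Printing Implicit Defensive.
Local Open Scope classical_set_scope.

(* A path is represented as a pair
   (a, es) : a start vertex and a list of edges.  (a, [::]) is the vertex a;
   (a, e1 :: ... :: en) is the path e1...en, with a = s(e1). *)
Section GraphInverseSemigroup.
Variables (V Ed : eqType) (r s : Ed -> V).

Definition gpath := (V * seq Ed)%type.

Definition valid_path (p : gpath) : bool :=
  match p.2 with
  | [::] => true
  | e :: es => (s e == p.1) && path (fun e f => r e == s f) e es
  end.

Definition prange (p : gpath) : V :=
  match p.2 with
  | [::] => p.1
  | e :: es => r (last e es)
  end.

(* Elements of G(E): None is 0; Some (u, v) is u v^{-1}. *)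
Definition graph_inv_sg := option (gpath * gpath).

Definition GE_elem (x : graph_inv_sg) : Prop :=
  match x with
  | None => True
  | Some (u, v) => valid_path u /\ valid_path v /\ prange u = prange v
  end.

Definition GE_set : set graph_inv_sg := [set x | GE_elem x].

(* u1 v1^{-1} . u2 v2^{-1} = u1 w v2^{-1} if u2 = v1 w,
                           = u1 (v2 w)^{-1} if v1 = u2 w, else 0 *)
Definition GE_mul (x y : graph_inv_sg) : graph_inv_sg :=
  match x, y with
  | Some (u1, v1), Some (u2, v2) =>
      if (v1.1 == u2.1) && prefix v1.2 u2.2 then
        Some ((u1.1, u1.2 ++ drop (size v1.2) u2.2), v2)
      else if (u2.1 == v1.1) && prefix u2.2 v1.2 then
        Some (u1, (v2.1, v2.2 ++ drop (size u2.2) v1.2))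
      else None
  | _, _ => None
  end.

End GraphInverseSemigroup.

Definition topological_semigroup (T : topologicalType) (m : T -> T -> T) : Prop :=
  hausdorff_space T /\ associative m /\ continuous (fun p : T * T => m p.1 p.2).

Definition topological_embedding (T S : topologicalType) (f : T -> S) : Prop :=
  injective f /\ continuous f /\
  forall U : set T, open U -> exists W : set S, open W /\ f @` U = W `&` range f.

From HB Require Import structures.
From mathcomp Require Import all_boot all_order.
From mathcomp Require Import boolp classical_sets functions cardinality topology.
Set Implicit Arguments. Unset Strict Implicit. Unset Printing Implicit Defensive.
Local Open Scope classical_set_scope.

(* Every nonzero idempotent uu^-1 is isolated among the idempotents of G(E) in
   any Hausdorff semigroup topology: apart from the finitely many pp^-1 with p a
   proper prefix of u, the idempotents near uu^-1 are of the form (uhw)(uhw)^-1,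
   all with the same edge h since their pairwise products are nonzero; they are
   fixed by left multiplication with (uh)(uh)^-1, which does not fix uu^-1.
   Now let x in S be a limit of elements y of G(E).  By compactness the
   idempotents yy^-1 cluster at some idempotent e, and y = (yy^-1)y gives x = ex.
   If e = 0 then x = 0x = 0; otherwise e = uu^-1 is isolated, so x is a limit of
   elements y with yy^-1 = uu^-1.  Repeating this with y^-1y = vv^-1 leaves the
   single element uv^-1, which is therefore x. *)

Lemma closure_setI_nbhs (T : topologicalType) (A N : set T) (x : T) :
  closure A x -> nbhs x N -> closure (A `&` N) x.
Proof.
by move=> clAx Nx B Bx; have [y [Ay [Ny By]]] := clAx _ (filterI Nx Bx); exists y.
Qed.

Lemma closure_continuous_eq (T S : topologicalType) (phi psi : T -> S)
    (A : set T) (x : T) :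
  hausdorff_space S -> {for x, continuous phi} -> {for x, continuous psi} ->
  (forall a, A a -> phi a = psi a) -> closure A x -> phi x = psi x.
Proof.
move=> hS phix psix eqA; rewrite closureEcvg => -[G PG [Gx AG]].
apply: (cvg_unique hS (F := phi @ G)); first exact: cvg_fmap phix Gx.
apply: cvg_trans (cvg_fmap psix Gx).
by apply: near_eq_cvg; apply: AG => a Aa; rewrite eqA.
Qed.

Lemma compact_closure_pair (X : Type) (T S : topologicalType) (K : set T)
    (Y : set X) (kappa : X -> T) (phi : X -> S) (x : S) :
  compact K -> kappa @` Y `<=` K -> closure (phi @` Y) x ->
  exists2 c, K c & closure [set (kappa y, phi y) | y in Y] (c, x).
Proof.
move=> cK YK clx.
pose F := filter_from (nbhs x) (fun B => kappa @` (Y `&` phi @^-1` B)).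
have FF : ProperFilter F.
  apply: filter_from_proper; last first.
    by move=> B /clx[_ [[y Yy <-] By]]; exists (kappa y), y.
  apply: filter_from_filter; first by exists setT; exact: filterT.
  move=> B1 B2 B1x B2x; exists (B1 `&` B2); first exact: filterI.
  by move=> _ [y [Yy [B1y B2y]] <-]; split; exists y.
have [|c [Kc clc]] := cK F FF.
  by exists setT; [exact: filterT | move=> _ [y [Yy _] <-]; apply: YK; exists y].
exists c => // W [[A B] /= [Ac Bx] ABW].
have FB : F (kappa @` (Y `&` phi @^-1` B)) by exists B.
have [_ [[y [Yy By] <-] Ay]] := clc _ _ FB Ac.
by exists (kappa y, phi y); split; [exists y | exact: (ABW (_, _))].
Qed.

Lemma continuous_left_mul (T : topologicalType) (m : T -> T -> T) (c : T) :
  continuous (fun p : T * T => m p.1 p.2) -> continuous (m c).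
Proof. by move=> mc t; apply: continuous2_cvg (mc (c, t)) (cvg_cst _) cvg_id. Qed.

Lemma continuous_op_comp_fst (T S : topologicalType) (o : S -> S -> S) (f : T -> S) :
  continuous (fun p : S * S => o p.1 p.2) -> continuous f ->
  continuous (fun p : T * S => o (f p.1) p.2).
Proof.
move=> oc fc [t x]; apply: continuous2_cvg (oc (f t, x)) _ cvg_snd.
exact: (cvg_comp fst f cvg_fst (fc t)).
Qed.

Lemma nbhs_mul_neq (T : topologicalType) (m : T -> T -> T) (a z : T) :
  hausdorff_space T -> continuous (fun p : T * T => m p.1 p.2) -> m a a != z ->
  exists2 W, nbhs a W & forall s t, W s -> W t -> m s t != z.
Proof.
move=> hT mc /(hausdorff_accessible hT)[U [oU /set_mem Uaa /set_mem Uz]].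
have [[A B] /= [Aa Ba] ABU] := mc (a, a) U (open_nbhs_nbhs (conj oU Uaa)).
exists (A `&` B); first exact: filterI.
move=> s t [As _] [_ Bt]; apply/eqP => mz; apply: Uz; rewrite -mz.
exact: (ABU (s, t)).
Qed.

Section GraphInverseSemigroupAlgebra.
Variables V Ed : eqType.
Implicit Types (p u : gpath V Ed) (y : graph_inv_sg V Ed).

Definition ppinv p : graph_inv_sg V Ed := Some (p, p).

Definition left_idem y : graph_inv_sg V Ed :=
  if y is Some (u, _) then ppinv u else None.

Definition right_idem y : graph_inv_sg V Ed :=
  if y is Some (_, v) then ppinv v else None.

Lemma GE_mul0r y : GE_mul y None = None.
Proof. by case: y => [[]|]. Qed.

Lemma GE_mul_left_idem y : GE_mul (left_idem y) y = y.
Proof.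
by case: y => [[[a su] [b sv]]|] //=; rewrite eqxx prefix_refl drop_size cats0.
Qed.

Lemma GE_mul_right_idem y : GE_mul y (right_idem y) = y.
Proof.
by case: y => [[[a su] [b sv]]|] //=; rewrite eqxx prefix_refl drop_size cats0.
Qed.

Lemma ppinv_idem p : GE_mul (ppinv p) (ppinv p) = ppinv p.
Proof. exact: (GE_mul_left_idem (ppinv p)). Qed.

Lemma GE_idem_diag u v : GE_mul (Some (u, v)) (Some (u, v)) = Some (u, v) -> u = v.
Proof.
have cat_drop_eq (s1 s2 : seq Ed) :
    s1 ++ drop (size s2) s1 = s1 -> prefix s2 s1 -> s1 = s2.
  move=> /(congr1 size) + /prefixP[w esu]; rewrite esu size_cat -[RHS]addn0.
  by rewrite drop_size_cat // => /eqP; rewrite eqn_add2l size_eq0 => /eqP ->; rewrite cats0.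
case: u v => [a su] [b sv] /=.
case: ifP => [/andP[/eqP -> pre] [] /cat_drop_eq -> //|_].
by case: ifP => [/andP[/eqP -> pre] [] /cat_drop_eq -> //|].
Qed.

Lemma ppinv_mul_neq0 p u : GE_mul (ppinv u) (ppinv p) != None ->
  p.1 = u.1 /\ (prefix p.2 u.2 || prefix u.2 p.2).
Proof.
case: u p => [a su] [b sp] /=.
case: ifP => [/andP[/eqP -> ->] _|_]; first by rewrite orbT.
by case: ifP => [/andP[/eqP -> ->] _|_] //; rewrite eqxx.
Qed.

Lemma ppinv_mul_ext p w :
  GE_mul (ppinv p) (ppinv (p.1, p.2 ++ w)) = ppinv (p.1, p.2 ++ w).
Proof. by case: p => a su /=; rewrite eqxx prefix_prefix drop_size_cat. Qed.

Lemma ext_mul_ppinv p w :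
  GE_mul (ppinv (p.1, p.2 ++ w)) (ppinv p) = ppinv (p.1, p.2 ++ w).
Proof.
case: p => a su /=; rewrite eqxx /=.
case: w => [|h t]; first by rewrite !cats0 prefix_refl drop_size cats0.
have -> : prefix (su ++ h :: t) su = false.
  apply/negbTE; apply: contraTN isT => /size_prefix.
  by rewrite size_cat /= addnS ltnNge leq_addr.
by rewrite prefix_prefix /= drop_size_cat.
Qed.

Lemma ppinv_mul_neq0_ext u y : GE_mul (ppinv u) y != None -> GE_mul y y = y ->
  y != ppinv u -> (forall n, n < size u.2 -> y != ppinv (u.1, take n u.2)) ->
  exists h w, y = ppinv (u.1, u.2 ++ h :: w).
Proof.
case: y => [[p q]|]; last by rewrite GE_mul0r eqxx.
move=> + /GE_idem_diag pq; rewrite -pq => /ppinv_mul_neq0[].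
case: p u {q pq} => b sp [a su] /= -> {b}.
case/orP => [/prefixP[w ->] | /prefixP[[|h w] ->]]; last 2 first.
- by rewrite cats0 eqxx.
- by move=> *; exists h, w.
case: w => [|h w]; first by rewrite cats0 eqxx.
move=> _ /(_ (size sp)); rewrite take_size_cat // size_cat /= -addSnnS leq_addr.
by move=> /(_ isT); rewrite eqxx.
Qed.

Lemma ppinv_ext_mul_neq0 (a : V) (su : seq Ed) h w h' w' :
  GE_mul (ppinv (a, su ++ h :: w)) (ppinv (a, su ++ h' :: w')) != None -> h' = h.
Proof.
move=> /ppinv_mul_neq0[_] /=; rewrite !prefix_catr // eqxx /=.
by case/orP => /andP[/eqP].
Qed.

End GraphInverseSemigroupAlgebra.

Section GraphInverseSemigroupElements.
Variables (V Ed : eqType) (r s : Ed -> V).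

Definition GE_idems : set (graph_inv_sg V Ed) :=
  [set x | GE_set r s x /\ GE_mul x x = x].

Lemma GE_idems_left y : GE_set r s y -> GE_idems (left_idem y).
Proof. by case: y => [[u v] [vu _]|] //; split; [split|exact: ppinv_idem]. Qed.

Lemma GE_idems_right y : GE_set r s y -> GE_idems (right_idem y).
Proof. by case: y => [[u v] [_ [vv _]]|] //; split; [split|exact: ppinv_idem]. Qed.

Lemma GE_idemsE y : GE_idems y -> y = None \/ exists u, y = ppinv u.
Proof.
case: y => [[u v] [_ /GE_idem_diag uv]|]; last by left.
by right; exists u; rewrite /ppinv uv.
Qed.

Lemma valid_path_catl a s1 s2 : valid_path r s (a, s1 ++ s2) -> valid_path r s (a, s1).
Proof. by case: s1 => [|e es] //; rewrite /valid_path /= cat_path => /andP[-> /andP[]]. Qed.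

End GraphInverseSemigroupElements.

Section IsolatedIdempotents.
Variables (V Ed : eqType) (r s : Ed -> V).
Variables (T : topologicalType) (mT : T -> T -> T) (g : graph_inv_sg V Ed -> T).
Hypothesis hT : hausdorff_space T.
Hypothesis mT_cont : continuous (fun p : T * T => mT p.1 p.2).
Hypothesis g_inj : {in GE_set r s &, injective g}.
Hypothesis g_mul : forall x y, GE_set r s x -> GE_set r s y ->
  g (GE_mul x y) = mT (g x) (g y).

Let g_inj' x y : GE_set r s x -> GE_set r s y -> g x = g y -> x = y.
Proof. by move=> Gx Gy; apply: g_inj; rewrite in_setE. Qed.

Lemma GE_mul_neq0_nbhs e : GE_idems r s e -> e != None ->
  exists2 W, nbhs (g e) W & forall y1 y2, GE_set r s y1 -> GE_set r s y2 ->
    W (g y1) -> W (g y2) -> GE_mul y1 y2 != None.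
Proof.
move=> [Ge ee] e0.
have /(nbhs_mul_neq hT mT_cont)[W We Wmul] : mT (g e) (g e) != g None.
  by rewrite -g_mul // ee; apply: contra_neq e0; apply: g_inj'.
exists W => // y1 y2 Gy1 Gy2 Wy1 Wy2; apply: contra_neq (Wmul _ _ Wy1 Wy2) => y0.
by rewrite -g_mul // y0.
Qed.

Lemma nbhs_ppinv_not_prefix (a : V) (su : seq Ed) : GE_set r s (ppinv (a, su)) ->
  nbhs (g (ppinv (a, su))) (~` [set g (ppinv (a, take n su)) | n in `I_(size su)]).
Proof.
move=> Ge; have G_prefix n : GE_set r s (ppinv (a, take n su)).
  case: Ge => vsu _.
  have : valid_path r s (a, take n su ++ drop n su) by rewrite cat_take_drop.
  by move/valid_path_catl.
apply: open_nbhs_nbhs; split.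
  apply: closed_openC; apply: (accessible_finite_set_closed.1 (hausdorff_accessible hT)).
  exact: finite_image (finite_II _).
move=> [n /= ltn /(g_inj' (G_prefix n) Ge)] [] /(congr1 size).
by rewrite size_take ltn => /eqP; rewrite ltn_eqF.
Qed.

Lemma ppinv_isolated u : GE_set r s (ppinv u) ->
  ~ closure (g @` (GE_idems r s `\ ppinv u)) (g (ppinv u)).
Proof.
case: u => a su; set e := ppinv _ => Ge cle.
have [W We Wmul] := GE_mul_neq0_nbhs (conj Ge (ppinv_idem _)) isT.
have nPe := nbhs_ppinv_not_prefix Ge.
have {cle} := closure_setI_nbhs (closure_setI_nbhs cle We) nPe.
set X := _ `&` _ `&` _ => clX.
have X_ext t : X t -> exists h w y,
    [/\ GE_set r s y, W (g y), t = g y & y = ppinv (a, su ++ h :: w)].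
  move=> [[[y [[Gy yy] /eqP ye] <-] Wy] nPy].
  have [h [w yE]] : exists h w, y = ppinv (a, su ++ h :: w).
    apply: (@ppinv_mul_neq0_ext _ _ (a, su)) => //.
      exact: Wmul (nbhs_singleton We) Wy.
    by move=> n ltn; apply: contraPneq nPy => -> nP; apply: nP; exists n.
  by exists h, w, y.
have [_ [/X_ext[h [w1 [y1 [Gy1 Wy1 -> y1E]]]] _]] := clX setT filterT.
set e' := ppinv (a, su ++ [:: h]).
have Ge' : GE_set r s e'.
  move: Gy1; rewrite y1E => -[vy1 _].
  have : valid_path r s (a, (su ++ [:: h]) ++ w1) by rewrite -catA.
  by move/valid_path_catl.
have e'X t : X t -> mT (g e') t = t.
  move=> /X_ext[h' [w [y [Gy Wy -> yE]]]].
  have h'h : h' = h.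
    by apply: (@ppinv_ext_mul_neq0 _ _ a su h w1 h' w); rewrite -y1E -yE; exact: Wmul.
  rewrite -g_mul // yE h'h.
  have -> : su ++ h :: w = (su ++ [:: h]) ++ w by rewrite -catA.
  by rewrite (ppinv_mul_ext (a, su ++ [:: h])).
have := closure_continuous_eq hT (@continuous_left_mul _ _ (g e') mT_cont (g e)) cvg_id e'X clX.
rewrite -g_mul // (ext_mul_ppinv (a, su) [:: h]) /= => /(g_inj' Ge' Ge) [] /(congr1 size).
by rewrite size_cat addn1 => /eqP; rewrite eqn_leq ltnn.
Qed.

End IsolatedIdempotents.

Section ClosureOfGE.
Variables (V Ed : eqType) (r s : Ed -> V).
Variables (T : topologicalType) (mT : T -> T -> T) (g : graph_inv_sg V Ed -> T).
Variables (S : topologicalType) (mS : S -> S -> S) (f : T -> S).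
Hypothesis hT : hausdorff_space T.
Hypothesis mT_cont : continuous (fun p : T * T => mT p.1 p.2).
Hypothesis g_inj : {in GE_set r s &, injective g}.
Hypothesis g_mul : forall x y, GE_set r s x -> GE_set r s y ->
  g (GE_mul x y) = mT (g x) (g y).
Hypothesis idems_compact : compact (g @` GE_idems r s).
Hypothesis hS : hausdorff_space S.
Hypothesis mS_cont : continuous (fun p : S * S => mS p.1 p.2).
Hypothesis f_cont : continuous f.
Hypothesis f_mul : forall x y, f (mT x y) = mS (f x) (f y).

Lemma closure_idem_split (k : graph_inv_sg V Ed -> graph_inv_sg V Ed)
    (o : S -> S -> S) (Y : set (graph_inv_sg V Ed)) (x : S) :
  continuous (fun p : S * S => o p.1 p.2) ->
  (forall y, GE_set r s y -> GE_idems r s (k y)) ->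
  (forall y, GE_set r s y -> o (f (g (k y))) (f (g y)) = f (g y)) ->
  (forall y, GE_set r s y -> o (f (g None)) (f (g y)) = f (g None)) ->
  Y `<=` GE_set r s -> closure ((f \o g) @` Y) x ->
  x = f (g None) \/ exists u, closure ((f \o g) @` (Y `&` [set y | k y = ppinv u])) x.
Proof.
move=> o_cont k_idem k_unit zero_abs YG clx.
have kY_idems : (g \o k) @` Y `<=` g @` GE_idems r s.
  by move=> _ [y Yy <-]; exists (k y) => //; exact: k_idem (YG y Yy).
have [_ [e0 e0I <-] cle0x] := compact_closure_pair idems_compact kY_idems clx.
have e0x : o (f (g e0)) x = x.
  apply: (closure_continuous_eq hS
    (@continuous_op_comp_fst _ _ _ _ o_cont f_cont (g e0, x)) cvg_snd _ cle0x).
  by move=> _ [y Yy <-] /=; exact: k_unit (YG y Yy).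
have [e00|[u e0u]] := GE_idemsE e0I.
  left; rewrite -e0x e00.
  apply: (closure_continuous_eq hS (@continuous_left_mul _ _ _ o_cont x) (cvg_cst _) _ clx).
  by move=> _ [y Yy <-]; exact: zero_abs (YG y Yy).
right; exists u; move: e0I cle0x; rewrite e0u => -[Ge0 _] cle0x.
have : (~` closure (g @` (GE_idems r s `\ ppinv u))) (g (ppinv u)).
  exact: (ppinv_isolated hT mT_cont g_inj g_mul Ge0).
rewrite -interiorC => Ne0 B Bx.
have [_ [[y Yy <-] [/= Ny By]]] :=
  cle0x (_ `*` _) (ex_intro2 _ _ (_, B) (conj Ne0 Bx) (@subset_refl _ _)).
exists (f (g y)); split => //; exists y => //; split => //=.
by apply: contrapT => kyu; apply: Ny; exists (k y) => //; split => //; exact: k_idem (YG y Yy).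
Qed.

Lemma closure_image_GE x : closure ((f \o g) @` GE_set r s) x -> exists y, x = f (g y).
Proof.
move=> clx.
have fg_mul y z : GE_set r s y -> GE_set r s z ->
    f (g (GE_mul y z)) = mS (f (g y)) (f (g z)).
  by move=> Gy Gz; rewrite g_mul // f_mul.
have mS_swap_cont : continuous (fun p : S * S => mS p.2 p.1).
  by move=> p; apply: (continuous_comp (@swap_continuous S S p) (@mS_cont _)).
have left_unit y : GE_set r s y -> mS (f (g (left_idem y))) (f (g y)) = f (g y).
  by move=> Gy; rewrite -fg_mul ?GE_mul_left_idem //; case: (GE_idems_left Gy).
have right_unit y : GE_set r s y -> mS (f (g y)) (f (g (right_idem y))) = f (g y).
  by move=> Gy; rewrite -fg_mul ?GE_mul_right_idem //; case: (GE_idems_right Gy).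
have zero_left y : GE_set r s y -> mS (f (g None)) (f (g y)) = f (g None).
  by move=> Gy; rewrite -fg_mul.
have zero_right y : GE_set r s y -> mS (f (g y)) (f (g None)) = f (g None).
  by move=> Gy; rewrite -fg_mul // GE_mul0r.
have [->|[u clu]] := closure_idem_split mS_cont (@GE_idems_left _ _ r s)
  left_unit zero_left (@subset_refl _ _) clx; first by exists None.
have [->|[v cluv]] := closure_idem_split (o := fun a b => mS b a) mS_swap_cont
  (@GE_idems_right _ _ r s) right_unit zero_right (@subIsetl _ _ _) clu.
  by exists None.
exists (Some (u, v)); apply: (accessible_closed_set1 (hausdorff_accessible hS)).
apply: closureS cluv => _ [[[u' v']|] [[_ /= yu] yv] <-] //.
by case: yu yv => -> _ [-> _].
Qed.

End ClosureOfGE.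

Theorem lemma2p5 (V Ed : eqType) (r s : Ed -> V)
  (T : topologicalType) (mT : T -> T -> T) (g : graph_inv_sg V Ed -> T)
  (S : topologicalType) (mS : S -> S -> S) (f : T -> S) :
  set_bij (GE_set r s) setT g ->
  (forall x y, GE_set r s x -> GE_set r s y ->
     g (GE_mul x y) = mT (g x) (g y)) ->
  topological_semigroup mT ->
  compact (g @` [set x | GE_set r s x /\ GE_mul x x = x]) ->
  topological_semigroup mS ->
  topological_embedding f ->
  (forall x y, f (mT x y) = mS (f x) (f y)) ->
  closed (range f).
Proof.
move=> [_ g_inj g_surj] g_mul [hT [_ mT_cont]] idems_compact [hS [_ mS_cont]].
move=> [_ [f_cont _]] f_mul x clx.
have : closure ((f \o g) @` GE_set r s) x.
  by apply: closureS clx => _ [t _ <-]; have [y Gy <-] := g_surj t I; exists y.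
case/(closure_image_GE hT mT_cont g_inj g_mul idems_compact hS mS_cont f_cont f_mul).
by move=> y ->; exists (g y).
Qed.
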